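(* Let $\mathbb G$ be any 2-group and $n\geq1$. Then the wreath 2-product $\mathsf S_n\wr\wr\ \mathbb G$ is split if and only if $\mathbb G$ is split.
   Context: A 2-group is a monoidal groupoid $(\mathcal G,\otimes,e,a,l,r)$ in which every object has a weak tensor inverse. $\mathsf S_n\wr\wr\ \mathbb G$ is the 2-group with objects $(\sigma,\mathbf x)$, $\sigma\in\mathsf S_n$, $\mathbf x=(x_1,\dots,x_n)$ objects of $\mathcal G$; morphisms $(\sigma,\mathbf x)\to(\sigma,\mathbf x')$ are $n$-tuples of morphisms $x_i\to x'_i$ (none between different permutations), composed componentwise; tensor $(\sigma,\mathbf{x})\otimes(\sigma',\mathbf{x}')=(\sigma\sigma',(\mathbf{x}\rhd\sigma')\otimes\mathbf{x}')$ and analogously on morphisms, with $\mathbf{x}\rhd\sigma=(x_{\sigma(1)},\dots,x_{\sigma(n)})$ and componentwise $\otimes$; unit $(id,(e,\dots,e))$; associator $(id,a_{\mathbf x\rhd(\sigma'\sigma''),\mathbf x'\rhd\sigma'',\mathbf x''})$ and unitors $(id_\sigma,l_{\mathbf x})$, $(id_\sigma,r_{\mathbf x})$, computed componentwise. A 2-group is split if it is equivalent (monoidal functor with pseudo-inverse up to monoidal natural isomorphism) to an elementary 2-group $\mathsf A[1]\rtimes\mathsf G[0]$ for some group $\mathsf G$ and left $\mathsf G$-module $\mathsf A$: the strict 2-group with objects the elements of $\mathsf G$, morphisms $(a,g):g\to g$, composition $(a',g)\circ(a,g)=(a'+a,g)$, tensor $g\otimes g'=gg'$, $(a,g)\otimes(a',g')=(a+g\lhd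 a',gg')$. *)

From mathcomp Require Import all_boot all_fingroup.
Set Implicit Arguments. Unset Strict Implicit. Unset Printing Implicit Defensive.

Record tg := TG {
  ob : Type;
  hom : ob -> ob -> Type;
  idm : forall x, hom x x;
  comp : forall x y z, hom y z -> hom x y -> hom x z;
  tens : ob -> ob -> ob;
  tensm : forall x x' y y', hom x x' -> hom y y' -> hom (tens x y) (tens x' y');
  unit : ob;
  assoc : forall x y z, hom (tens (tens x y) z) (tens x (tens y z));
  lunit : forall x, hom (tens unit x) x;
  runit : forall x, hom (tens x unit) x }.

Arguments hom {t}.
Arguments idm {t}.
Arguments comp {t x y z}.
Arguments tens {t}.
Arguments tensm {t x x' y y'}.
Arguments unit {t}.
Arguments assoc {t}.
Arguments lunit {t}.
Arguments runit {t}.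

Record is_twogroup (G : tg) : Prop := {
  comp_assoc : forall (x y z w : ob G) (f : hom x y) (g : hom y z) (h : hom z w),
      comp h (comp g f) = comp (comp h g) f;
  comp_idl : forall (x y : ob G) (f : hom x y), comp (idm y) f = f;
  comp_idr : forall (x y : ob G) (f : hom x y), comp f (idm x) = f;
  groupoid : forall (x y : ob G) (f : hom x y),
      exists g : hom y x, comp g f = idm x /\ comp f g = idm y;
  tensm_id : forall x y : ob G, tensm (idm x) (idm y) = idm (tens x y);
  tensm_comp : forall (x x' x'' y y' y'' : ob G) (f : hom x x') (f' : hom x' x'')
      (g : hom y y') (g' : hom y' y''),
      tensm (comp f' f) (comp g' g) = comp (tensm f' g') (tensm f g);
  assoc_nat : forall (x x' y y' z z' : ob G) (f : hom x x') (g : hom y y') (h : hom z z'),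
      comp (assoc x' y' z') (tensm (tensm f g) h)
      = comp (tensm f (tensm g h)) (assoc x y z);
  lunit_nat : forall (x x' : ob G) (f : hom x x'),
      comp (lunit x') (tensm (idm unit) f) = comp f (lunit x);
  runit_nat : forall (x x' : ob G) (f : hom x x'),
      comp (runit x') (tensm f (idm unit)) = comp f (runit x);
  pentagon : forall x y z w : ob G,
      comp (assoc x y (tens z w)) (assoc (tens x y) z w)
      = comp (tensm (idm x) (assoc y z w))
             (comp (assoc x (tens y z) w) (tensm (assoc x y z) (idm w)));
  triangle : forall x y : ob G,
      comp (tensm (idm x) (lunit y)) (assoc x unit y) = tensm (runit x) (idm y);
  weak_inverse : forall x : ob G, exists y : ob G,
      inhabited (hom (tens x y) unit) /\ inhabited (hom (tens y x) unit) }.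

Definition hom_of_eq (G : tg) (a b : ob G) (p : a = b) : hom a b :=
  match p in _ = b' return hom a b' with erefl => idm a end.

Record mfun (G H : tg) := MFun {
  fob : ob G -> ob H;
  fhom : forall x y : ob G, hom x y -> hom (fob x) (fob y);
  fphi : forall x y : ob G, hom (tens (fob x) (fob y)) (fob (tens x y));
  fphi0 : hom (@unit H) (fob unit) }.
Arguments fob {G H}.
Arguments fhom {G H} _ {x y}.
Arguments fphi {G H}.
Arguments fphi0 {G H}.

Record is_mfun (G H : tg) (F : mfun G H) : Prop := {
  fhom_id : forall x : ob G, fhom F (idm x) = idm (fob F x);
  fhom_comp : forall (x y z : ob G) (f : hom x y) (g : hom y z),
      fhom F (comp g f) = comp (fhom F g) (fhom F f);
  fphi_nat : forall (x x' y y' : ob G) (f : hom x x') (g : hom y y'),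
      comp (fphi F x' y') (tensm (fhom F f) (fhom F g))
      = comp (fhom F (tensm f g)) (fphi F x y);
  fhexagon : forall x y z : ob G,
      comp (fhom F (assoc x y z))
           (comp (fphi F (tens x y) z) (tensm (fphi F x y) (idm (fob F z))))
      = comp (fphi F x (tens y z))
             (comp (tensm (idm (fob F x)) (fphi F y z))
                   (assoc (fob F x) (fob F y) (fob F z)));
  funit_l : forall x : ob G,
      comp (fhom F (lunit x)) (comp (fphi F unit x) (tensm (fphi0 F) (idm (fob F x))))
      = lunit (fob F x);
  funit_r : forall x : ob G,
      comp (fhom F (runit x)) (comp (fphi F x unit) (tensm (idm (fob F x)) (fphi0 F)))
      = runit (fob F x) }.

Definition idF (G : tg) : mfun G G :=
  @MFun G G (fun x => x) (fun x y f => f) (fun x y => idm (tens x y)) (idm unit).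

Definition compF (G H L : tg) (K : mfun H L) (F : mfun G H) : mfun G L :=
  @MFun G L (fun x => fob K (fob F x))
    (fun x y f => fhom K (fhom F f))
    (fun x y => comp (fhom K (fphi F x y)) (fphi K (fob F x) (fob F y)))
    (comp (fhom K (fphi0 F)) (fphi0 K)).

(* monoidal natural transformation F => F'; in a groupoid its components
   are automatically isomorphisms, so this is a monoidal natural iso. *)
Record is_mnat (G H : tg) (F F' : mfun G H) (eta : forall x, hom (fob F x) (fob F' x))
  : Prop := {
  mnat_nat : forall (x y : ob G) (f : hom x y),
      comp (eta y) (fhom F f) = comp (fhom F' f) (eta x);
  mnat_tens : forall x y : ob G,
      comp (eta (tens x y)) (fphi F x y) = comp (fphi F' x y) (tensm (eta x) (eta y));
  mnat_unit : comp (eta unit) (fphi0 F) = fphi0 F' }.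

Arguments is_mnat {G H} F F' eta.

Definition equivalent (G H : tg) : Prop :=
  exists (F : mfun G H) (K : mfun H G),
    [/\ is_mfun F, is_mfun K,
        (exists eta, is_mnat (compF K F) (idF G) eta) &
        (exists eps, is_mnat (compF F K) (idF H) eps)].

Record group := Group {
  gcar : Type;
  gmul : gcar -> gcar -> gcar;
  gone : gcar;
  ginv : gcar -> gcar;
  gmulA : forall a b c, gmul a (gmul b c) = gmul (gmul a b) c;
  gmul1l : forall a, gmul gone a = a;
  gmul1r : forall a, gmul a gone = a;
  gmulVl : forall a, gmul (ginv a) a = gone;
  gmulVr : forall a, gmul a (ginv a) = gone }.

Record gmodule (Gr : group) := GModule {
  mcar : Type;
  madd : mcar -> mcar -> mcar;
  mzero : mcar;
  mneg : mcar -> mcar;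
  mact : gcar Gr -> mcar -> mcar;
  maddA : forall a b c, madd a (madd b c) = madd (madd a b) c;
  maddC : forall a b, madd a b = madd b a;
  madd0 : forall a, madd mzero a = a;
  maddN : forall a, madd (mneg a) a = mzero;
  mact_add : forall g a b, mact g (madd a b) = madd (mact g a) (mact g b);
  mact1 : forall a, mact (gone Gr) a = a;
  mactM : forall g h a, mact (gmul g h) a = mact g (mact h a) }.

Definition elem (Gr : group) (A : gmodule Gr) : tg :=
  @TG (gcar Gr)
    (fun g h => (mcar A * (g = h))%type)
    (fun g => (mzero A, erefl g))
    (fun x y z b a => (madd b.1 a.1, etrans a.2 b.2))
    (gmul (g:=Gr))
    (fun x x' y y' f g => (madd f.1 (mact x g.1), f_equal2 (gmul (g:=Gr)) f.2 g.2))
    (gone Gr)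
    (fun x y z => (mzero A, esym (gmulA x y z)))
    (fun x => (mzero A, gmul1l x))
    (fun x => (mzero A, gmul1r x)).

Definition split_2group (G : tg) : Prop :=
  exists (Gr : group) (A : gmodule Gr), equivalent G (elem A).

Definition wob (n : nat) (G : tg) := ({perm 'I_n} * ('I_n -> ob G))%type.

Definition rhd (T : Type) (n : nat) (x : 'I_n -> T) (s : {perm 'I_n}) : 'I_n -> T :=
  fun i => x (s i).

(* the paper's product  s s'  is composition  s o s'  (apply s' first);
   in mathcomp, (t * s) i = s (t i). *)
Definition pcomp (n : nat) (s t : {perm 'I_n}) : {perm 'I_n} := (t * s)%g.

Section Wreath.
Variables (n : nat) (G : tg).

Definition whom (X Y : wob n G) : Type :=
  ((X.1 = Y.1) * (forall i, hom (X.2 i) (Y.2 i)))%type.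

Definition widm (X : wob n G) : whom X X := (erefl X.1, fun i => idm (X.2 i)).

Definition wcomp (X Y Z : wob n G) (g : whom Y Z) (f : whom X Y) : whom X Z :=
  (etrans f.1 g.1, fun i => comp (g.2 i) (f.2 i)).

Definition wtens (X Y : wob n G) : wob n G :=
  (pcomp X.1 Y.1, fun i => tens (rhd X.2 Y.1 i) (Y.2 i)).

Definition wtensm (X X' Y Y' : wob n G) (f : whom X X') (g : whom Y Y')
  : whom (wtens X Y) (wtens X' Y') :=
  (f_equal2 (@pcomp n) f.1 g.1,
   fun i => tensm (comp (hom_of_eq (f_equal (fun s : {perm 'I_n} => X'.2 (s i)) g.1))
                        (f.2 (Y.1 i)))
                  (g.2 i)).

Definition wunit : wob n G := (1%g, fun _ => unit).

Definition wassoc (X Y Z : wob n G) : whom (wtens (wtens X Y) Z) (wtens X (wtens Y Z)) :=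
  (mulgA Z.1 Y.1 X.1,
   fun i => comp (assoc (X.2 (pcomp Y.1 Z.1 i)) (Y.2 (Z.1 i)) (Z.2 i))
                 (tensm (tensm (hom_of_eq (f_equal X.2 (esym (permM Z.1 Y.1 i))))
                               (idm (Y.2 (Z.1 i))))
                        (idm (Z.2 i)))).

Definition wlunit (X : wob n G) : whom (wtens wunit X) X :=
  (mulg1 X.1, fun i => lunit (X.2 i)).

Definition wrunit (X : wob n G) : whom (wtens X wunit) X :=
  (mul1g X.1,
   fun i => comp (runit (X.2 i))
                 (tensm (hom_of_eq (f_equal X.2 (perm1 i))) (idm unit))).

Definition wreath : tg :=
  @TG (wob n G) whom widm wcomp wtens wtensm wunit wassoc wlunit wrunit.
End Wreath.

From HB Require Import structures.
From mathcomp Require Import all_boot all_fingroup ssralg ssrint boolp.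
Set Implicit Arguments. Unset Strict Implicit. Unset Printing Implicit Defensive.
Import GRing.Theory.
Local Open Scope ring_scope.

(* Both directions go through one characterisation of splitness: a 2-group
   H is split iff there is a monoidal functor F : H -> A[1] x| Gr[0] which
   is surjective on objects, full and faithful (a "weak equivalence").  The
   module components of F turn every coherence axiom into an identity in the
   abelian group A, which the tactic abel below decides.

   - If F : G -> A[1] x| Gr[0] is a weak equivalence, then applying F
     coordinatewise gives a weak equivalence from S_n wr wr G to the
     elementary 2-group of the wreath product S_n x| Gr^n acting on A^n.
   - Conversely, given a weak equivalence F from S_n wr wr G, we include G
     in S_n wr wr G at coordinate 0 (the other coordinates carrying the unit)
     and project the module onto the part seen by coordinate 0; F then
     restricts to a weak equivalence from G onto the elementary 2-group of
     this submodule over the subgroup of objects hit by G. *)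

(* An
   expression over atoms is normalised into its list of integer coefficients
   (the k-th entry is the multiplicity of the k-th atom); two expressions are
   equal whenever their difference normalises to the zero list. *)
Inductive zexpr := ZAtom of nat | ZZero | ZAdd of zexpr & zexpr | ZOpp of zexpr.

Section AbelianNormalisation.
Variable V : zmodType.

Fixpoint zeval (env : seq V) (e : zexpr) : V :=
  match e with
  | ZAtom i => nth 0 env i
  | ZZero => 0
  | ZAdd a b => zeval env a + zeval env b
  | ZOpp a => - zeval env a
  end.

Fixpoint coef_add (s t : seq int) : seq int :=
  match s, t with
  | [::], _ => t
  | _, [::] => s
  | a :: s', b :: t' => (a + b) :: coef_add s' t'
  end.

Fixpoint coefs (e : zexpr) : seq int :=
  match e with
  | ZAtom i => rcons (nseq i 0) 1
  | ZZero => [::]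
  | ZAdd a b => coef_add (coefs a) (coefs b)
  | ZOpp a => map (fun c => - c) (coefs a)
  end.

Fixpoint coef_eval (env : seq V) (s : seq int) : V :=
  if s is c :: s' then head 0 env *~ c + coef_eval (behead env) s' else 0.

Lemma coef_eval_add env s t :
  coef_eval env (coef_add s t) = coef_eval env s + coef_eval env t.
Proof.
elim: s t env => [|a s IH] [|b t] env /=; rewrite ?add0r ?addr0 //.
by rewrite IH mulrzDr addrACA.
Qed.

Lemma coef_eval_opp env s :
  coef_eval env (map (fun c => - c) s) = - coef_eval env s.
Proof. by elim: s env => [|a s IH] env /=; rewrite ?oppr0 // IH mulrNz opprD. Qed.

Lemma coef_eval_atom env i : coef_eval env (rcons (nseq i 0) 1) = nth 0 env i.
Proof.
elim: i env => [|i IH] [|x env] /=; rewrite ?mulr0z ?add0r ?addr0 ?mulr1z //.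
by rewrite IH nth_nil.
Qed.

Lemma zeval_coefs env e : zeval env e = coef_eval env (coefs e).
Proof.
elim: e => [i||a IHa b IHb|a IHa] /=;
  by rewrite ?coef_eval_atom ?coef_eval_add ?coef_eval_opp ?IHa ?IHb.
Qed.

Lemma coef_eval_zero env s : all (fun c => c == 0) s -> coef_eval env s = 0.
Proof.
elim: s env => [|c s IH] env //= /andP [/eqP -> zero_s].
by rewrite mulr0z add0r IH.
Qed.

Lemma abel_sound env e1 e2 :
  all (fun c => c == 0) (coefs (ZAdd e1 (ZOpp e2))) -> zeval env e1 = zeval env e2.
Proof.
move=> zero_coefs; apply/eqP; rewrite -subr_eq0; apply/eqP.
by have := coef_eval_zero env zero_coefs; rewrite -zeval_coefs.
Qed.

Lemma eq_of_eq_diff (p q s t : V) : p = q -> s - t = p - q -> s = t.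
Proof. by move=> ->; rewrite subrr => /eqP; rewrite subr_eq0 => /eqP. Qed.
End AbelianNormalisation.

Ltac zmod_of T :=
  let V := open_constr:(_ : zmodType) in
  let _ := constr:(erefl : GRing.Zmodule.sort V = T) in V.
Ltac conv_eq x t :=
  match goal with
  | _ => let _ := constr:(@erefl _ x : x = t) in constr:(true)
  | _ => constr:(false)
  end.
Ltac atom_mem t env :=
  lazymatch env with
  | cons ?x ?r =>
      let b := conv_eq x t in
      lazymatch b with true => constr:(true) | false => atom_mem t r end
  | _ => constr:(false)
  end.
Ltac atoms V env t :=
  match t with
  | (?a + ?b)%R => let e := atoms V env a in atoms V e b
  | (- ?a)%R => atoms V env a
  | 0%R => env
  | _ => let b := atom_mem t env in
         match b with
         | true => env
         | false => constr:(@cons (GRing.Zmodule.sort V) t env)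
         end
  end.
Ltac atom_index t env :=
  lazymatch env with
  | cons ?x ?r =>
      let b := conv_eq x t in
      lazymatch b with
      | true => constr:(0%N)
      | false => let k := atom_index t r in constr:(S k)
      end
  end.
Ltac reify env t :=
  match t with
  | (?a + ?b)%R => let e1 := reify env a in let e2 := reify env b in constr:(ZAdd e1 e2)
  | (- ?a)%R => let e := reify env a in constr:(ZOpp e)
  | 0%R => constr:(ZZero)
  | _ => let k := atom_index t env in constr:(ZAtom k)
  end.

(* abel proves an identity between sums of atoms and their opposites in an
   abelian group; abel_using h proves it from the hypothesis h. *)
Ltac abel :=
  lazymatch goal with
  | |- @eq ?T ?l ?r =>
    let V := zmod_of T in
    let env0 := atoms V (@nil (GRing.Zmodule.sort V)) l in
    let env := atoms V env0 r in
    let el := reify env l in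
    let er := reify env r in
    change (@zeval V env el = @zeval V env er);
    apply: abel_sound; vm_compute; reflexivity
  end.
Ltac abel_using h :=
  first [ apply: (eq_of_eq_diff h); abel | apply: (eq_of_eq_diff (esym h)); abel ].

HB.instance Definition _ (Gr : group) (A : gmodule Gr) := gen_eqMixin (mcar A).
HB.instance Definition _ (Gr : group) (A : gmodule Gr) := gen_choiceMixin (mcar A).
HB.instance Definition _ (Gr : group) (A : gmodule Gr) :=
  GRing.isZmodule.Build (mcar A) (@maddA _ A) (@maddC _ A) (@madd0 _ A) (@maddN _ A).

Section ModuleFacts.
Variables (Gr : group) (A : gmodule Gr).

Lemma maddE (a b : mcar A) : madd a b = a + b. Proof. by []. Qed.
Lemma mzeroE : mzero A = 0. Proof. by []. Qed.
Lemma mnegE (a : mcar A) : mneg a = - a. Proof. by []. Qed.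

Lemma mactD g (a b : mcar A) : mact g (a + b) = mact g a + mact g b.
Proof. exact: mact_add. Qed.

Lemma mact0 g : mact g (0 : mcar A) = 0.
Proof.
have double : mact g (0 : mcar A) = mact g 0 + mact g 0 by rewrite -mactD addr0.
by apply: (addrI (mact g 0)); rewrite addr0 -double.
Qed.

Lemma mactN g (a : mcar A) : mact g (- a) = - mact g a.
Proof. by apply/eqP; rewrite -addr_eq0 -mactD addNr mact0. Qed.

Lemma elem_hom_eq (g h : gcar Gr) (u v : @hom (elem A) g h) : u.1 = v.1 -> u = v.
Proof. by case: u v => a p [b q] /= ->; rewrite (Prop_irrelevance p q). Qed.
End ModuleFacts.

Ltac msimpl := rewrite ?maddE ?mzeroE ?mnegE ?mactD ?mactN ?mact0.

Definition fval (H : tg) (Gr : group) (A : gmodule Gr) (F : mfun H (elem A))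
  (x y : ob H) (f : hom x y) : mcar A := (fhom F f).1.
Arguments fval {H Gr A} F {x y} f.

(* Since morphisms of A[1] x| G[0]
   are module elements, fullness and faithfulness are stated on module
   components. *)
Section WeakEquivalence.
Variables (H : tg) (Gr : group) (A : gmodule Gr) (F : mfun H (elem A)).

Definition ob_surjective : Prop := forall g, exists x, fob F x = g.
Definition full : Prop :=
  forall x y, fob F x = fob F y -> forall a : mcar A, exists f : hom x y, fval F f = a.
Definition faithful : Prop :=
  forall x y (f f' : hom x y), fval F f = fval F f' -> f = f'.

Definition weak_equivalence : Prop := [/\ is_mfun F, ob_surjective, full & faithful].
End WeakEquivalence.

Section FunctorValues.
Variables (H : tg) (Gr : group) (A : gmodule Gr) (F : mfun H (elem A)).
Hypothesis HF : is_mfun F.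

Local Notation phi x y := ((fphi F x y).1 : mcar A).
Local Notation phi0 := ((fphi0 F).1 : mcar A).

Lemma fval_comp (x y z : ob H) (f : hom x y) (g : hom y z) :
  fval F (comp g f) = fval F g + fval F f.
Proof. by rewrite /fval (fhom_comp HF). Qed.

Lemma fval_id (x : ob H) : fval F (idm x) = 0.
Proof. by rewrite /fval (fhom_id HF). Qed.

Lemma fval_hom_of_eq (x y : ob H) (p : x = y) : fval F (hom_of_eq p) = 0.
Proof. by case: y / p; exact: fval_id. Qed.

Lemma fval_tensm (x x' y y' : ob H) (f : hom x x') (g : hom y y') :
  fval F (tensm f g) = phi x' y' + fval F f + mact (fob F x) (fval F g) - phi x y.
Proof. by have /(f_equal fst) /= := fphi_nat HF f g; msimpl => h; abel_using h. Qed.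

Lemma fval_assoc (x y z : ob H) : fval F (assoc x y z) =
  phi x (tens y z) + mact (fob F x) (phi y z) - phi (tens x y) z - phi x y.
Proof. by have /(f_equal fst) /= := fhexagon HF x y z; msimpl => h; abel_using h. Qed.

Lemma fval_lunit (x : ob H) : fval F (lunit x) = - phi unit x - phi0.
Proof. by have /(f_equal fst) /= := funit_l HF x; msimpl => h; abel_using h. Qed.

Lemma fval_runit (x : ob H) : fval F (runit x) = - phi x unit - mact (fob F x) phi0.
Proof. by have /(f_equal fst) /= := funit_r HF x; msimpl => h; abel_using h. Qed.
End FunctorValues.

(* A weak equivalence P : H -> A[1] x| G[0] has a monoidal pseudo-inverse K:
   K g is a chosen preimage of g, and K sends a morphism with component a to
   the unique morphism of H whose image has component a; the monoidal
   structure of K is obtained the same way from that of P. *)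
Section PseudoInverse.
Variables (H : tg) (Gr : group) (A : gmodule Gr) (P : mfun H (elem A)).
Hypotheses (HP : is_mfun P) (P_surj : ob_surjective P) (P_full : full P)
  (P_faithful : faithful P).

Local Notation E := (elem A).
Local Notation phi x y := ((fphi P x y).1 : mcar A).
Local Notation phi0 := ((fphi0 P).1 : mcar A).

Definition Kob (g : gcar Gr) : ob H := proj1_sig (cid (P_surj g)).
Lemma KobE g : fob P (Kob g) = g.
Proof. exact: proj2_sig (cid (P_surj g)). Qed.

Definition lift x y (e : fob P x = fob P y) (a : mcar A) : hom x y :=
  proj1_sig (cid (P_full e a)).
Lemma liftE x y e a : fval P (@lift x y e a) = a.
Proof. exact: proj2_sig (cid (P_full e a)). Qed.

Definition Khom (g h : gcar Gr) (u : @hom E g h) : hom (Kob g) (Kob h) :=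
  lift (etrans (KobE g) (etrans u.2 (esym (KobE h)))) u.1.

Definition Kphi (g h : gcar Gr) : hom (tens (Kob g) (Kob h)) (Kob (gmul g h)) :=
  lift (etrans (esym (fphi P (Kob g) (Kob h)).2)
               (etrans (f_equal2 (@gmul Gr) (KobE g) (KobE h)) (esym (KobE (gmul g h)))))
       (- phi (Kob g) (Kob h)).

Definition Kphi0 : hom unit (Kob (gone Gr)) :=
  lift (etrans (esym (fphi0 P).2) (esym (KobE (gone Gr)))) (- phi0).

Definition K : mfun E H := @MFun E H Kob Khom Kphi Kphi0.

Lemma K_mfun : is_mfun K.
Proof.
have act_KobE g (a : mcar A) : mact (fob P (Kob g)) a = mact g a by rewrite KobE.
split=> [g | g h k u v | g g' h h' u v | g h k | g | g]; apply: P_faithful;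
  rewrite /= /Khom /Kphi /Kphi0 ?(fval_comp HP) ?(fval_tensm HP) ?liftE ?(fval_assoc HP)
          ?(fval_lunit HP) ?(fval_runit HP) ?(fval_id HP) //= ?act_KobE; msimpl; abel.
Qed.

Definition eta (x : ob H) : hom (fob (compF K P) x) (fob (idF H) x) := lift (KobE _) 0.
Definition eps (g : gcar Gr) : @hom E (fob (compF P K) g) (fob (idF E) g) := (0, KobE g).

Lemma eta_mnat : is_mnat (compF K P) (idF H) eta.
Proof.
split=> [x y f | x y |]; apply: P_faithful;
  rewrite /= ?(fval_comp HP) /eta /Khom /Kphi /Kphi0 ?(fval_tensm HP) ?liftE //= ?(fval_id HP);
  msimpl; abel.
Qed.

Lemma eps_mnat : is_mnat (compF P K) (idF E) eps.
Proof.
split=> [g h u | g h |]; apply: elem_hom_eq;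
  rewrite /= /Khom /Kphi /Kphi0 -/(fval P _) liftE; msimpl; abel.
Qed.

Lemma equivalent_of_weak : equivalent H E.
Proof.
exists P, K; split=> //; [exact: K_mfun | by exists eta; exact: eta_mnat | by exists eps; exact: eps_mnat].
Qed.
End PseudoInverse.

Record is_groupoid (H : tg) : Prop := {
  gd_assoc : forall (x y z w : ob H) (f : hom x y) (g : hom y z) (h : hom z w),
      comp h (comp g f) = comp (comp h g) f;
  gd_idl : forall (x y : ob H) (f : hom x y), comp (idm y) f = f;
  gd_idr : forall (x y : ob H) (f : hom x y), comp f (idm x) = f;
  gd_inv : forall (x y : ob H) (f : hom x y),
      exists g : hom y x, comp g f = idm x /\ comp f g = idm y }.

Lemma twogroup_groupoid (G : tg) : is_twogroup G -> is_groupoid G.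
Proof. by case=> *; split. Qed.

Section GroupoidCancel.
Variables (H : tg) (HH : is_groupoid H).

Lemma comp_cancel_l (x y z : ob H) (e : hom y z) (f f' : hom x y) :
  comp e f = comp e f' -> f = f'.
Proof.
case: (gd_inv HH e) => e' [e'e _] eq_ef.
by rewrite -(gd_idl HH f) -(gd_idl HH f') -e'e -!(gd_assoc HH) eq_ef.
Qed.

Lemma comp_cancel_r (x y z : ob H) (e : hom x y) (f f' : hom y z) :
  comp f e = comp f' e -> f = f'.
Proof.
case: (gd_inv HH e) => e' [_ ee'] eq_fe.
by rewrite -(gd_idr HH f) -(gd_idr HH f') -ee' !(gd_assoc HH) eq_fe.
Qed.
End GroupoidCancel.

Section WeakOfEquivalence.
Variables (Gr : group) (A : gmodule Gr) (H : tg) (HH : is_groupoid H).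
Variables (F : mfun H (elem A)) (K : mfun (elem A) H).
Variables (eta : forall x, hom (fob (compF K F) x) (fob (idF H) x)).
Variables (eps : forall g, @hom (elem A) (fob (compF F K) g) (fob (idF (elem A)) g)).
Hypotheses (Heta : is_mnat _ _ eta) (Heps : is_mnat _ _ eps).

(* F o K is the identity on module components, by naturality of eps. *)
Lemma fval_K (g g' : gcar Gr) (u : @hom (elem A) g g') : fval F (fhom K u) = u.1.
Proof.
have /(f_equal fst) /= := mnat_nat Heps u; case: u => a p /=; subst g' => h.
by apply: (addrI ((eps g).1 : mcar A)); rewrite [LHS]h addrC.
Qed.

Lemma weak_ob_surjective : ob_surjective F.
Proof. by move=> g; exists (fob K g); exact: (eps g).2. Qed.

Lemma weak_faithful : faithful F.
Proof.
move=> x y f f' eq_val; have eq_Ff : fhom F f = fhom F f' by apply: elem_hom_eq.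
apply: (comp_cancel_r HH (e := eta x)).
by have := mnat_nat Heta f; have := mnat_nat Heta f'; rewrite /= eq_Ff => ->.
Qed.

Lemma weak_full : full F.
Proof.
move=> x y exy a; pose u : @hom (elem A) (fob F x) (fob F y) := (a, exy).
case: (gd_inv HH (eta x)) => eta'x [eta'x_eta _].
pose f := comp (eta y) (comp (fhom K u) eta'x); exists f.
suff KFf : fhom K (fhom F f) = fhom K u by rewrite -[a]/u.1 -(fval_K u) -KFf fval_K.
apply: (comp_cancel_l HH (e := eta y)).
have /= -> := mnat_nat Heta f.
by rewrite -!(gd_assoc HH) eta'x_eta (gd_idr HH).
Qed.
End WeakOfEquivalence.

Lemma split_of_weak (H : tg) (Gr : group) (A : gmodule Gr) (F : mfun H (elem A)) :
  weak_equivalence F -> split_2group H.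
Proof. by case=> HF surj fl fa; exists Gr, A; exact: (equivalent_of_weak HF surj fl fa). Qed.

Lemma weak_of_split (H : tg) : is_groupoid H -> split_2group H ->
  exists (Gr : group) (A : gmodule Gr) (F : mfun H (elem A)), weak_equivalence F.
Proof.
move=> HH [Gr [A [F [K [HF _ [eta Heta] [eps Heps]]]]]]; exists Gr, A, F; split=> //.
- exact: (weak_ob_surjective eps).
- exact: (weak_full HH Heta Heps).
- exact: (weak_faithful HH Heta).
Qed.

(* The wreath product group S_n x| Gr^n, with the product of the wreath
   2-product on objects, and the module A^n over it, on which (s, g) acts by
   permuting coordinates along s and acting by g coordinatewise. *)
Section WreathGroup.
Variables (n : nat) (Gr : group).
Local Notation C := ({perm 'I_n} * ('I_n -> gcar Gr))%type.

Definition wmul (X Y : C) : C := (pcomp X.1 Y.1, fun i => gmul (X.2 (Y.1 i)) (Y.2 i)).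
Definition wone : C := (1%g, fun _ => gone Gr).
Definition winv (X : C) : C := (X.1^-1%g, fun i => ginv (X.2 (X.1^-1%g i))).

Lemma pcompE (s t : {perm 'I_n}) i : pcomp s t i = s (t i).
Proof. by rewrite /pcomp permM. Qed.

Lemma pcompVE (s t : {perm 'I_n}) j : (pcomp s t)^-1%g j = t^-1%g (s^-1%g j).
Proof. by rewrite /pcomp invMg permM. Qed.

Lemma wmulA (X Y Z : C) : wmul X (wmul Y Z) = wmul (wmul X Y) Z.
Proof.
congr (_, _); first by rewrite /pcomp mulgA.
by apply: funext => i; rewrite /= /pcomp permM gmulA.
Qed.

Lemma wmul1l (X : C) : wmul wone X = X.
Proof.
case: X => s x; congr (_, _); first by rewrite /pcomp mulg1.
by apply: funext => i; rewrite gmul1l.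
Qed.

Lemma wmul1r (X : C) : wmul X wone = X.
Proof.
case: X => s x; congr (_, _); first by rewrite /pcomp mul1g.
by apply: funext => i; rewrite /= perm1 gmul1r.
Qed.

Lemma wmulVl (X : C) : wmul (winv X) X = wone.
Proof.
case: X => s x; congr (_, _); first by rewrite /pcomp mulgV.
by apply: funext => i; rewrite /= permK gmulVl.
Qed.

Lemma wmulVr (X : C) : wmul X (winv X) = wone.
Proof.
case: X => s x; congr (_, _); first by rewrite /pcomp mulVg.
by apply: funext => i; rewrite gmulVr.
Qed.

Definition wreath_group : group := Group wmulA wmul1l wmul1r wmulVl wmulVr.

Variable (A : gmodule Gr).
Local Notation M := ('I_n -> mcar A).

Definition wadd (a b : M) : M := fun i => madd (a i) (b i).
Definition wzero : M := fun _ => mzero A.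
Definition wneg (a : M) : M := fun i => mneg (a i).
Definition wact (X : C) (b : M) : M := fun j => mact (X.2 (X.1^-1%g j)) (b (X.1^-1%g j)).

Lemma waddA a b c : wadd a (wadd b c) = wadd (wadd a b) c.
Proof. by apply: funext => i; exact: maddA. Qed.
Lemma waddC a b : wadd a b = wadd b a.
Proof. by apply: funext => i; exact: maddC. Qed.
Lemma wadd0 a : wadd wzero a = a.
Proof. by apply: funext => i; exact: madd0. Qed.
Lemma waddN a : wadd (wneg a) a = wzero.
Proof. by apply: funext => i; exact: maddN. Qed.
Lemma wact_add g a b : wact g (wadd a b) = wadd (wact g a) (wact g b).
Proof. by apply: funext => i; exact: mact_add. Qed.
Lemma wact1 a : wact (gone wreath_group) a = a.
Proof. by apply: funext => i; rewrite /wact /= invg1 perm1 mact1. Qed.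
Lemma wactM g h a : wact (gmul (g:=wreath_group) g h) a = wact g (wact h a).
Proof.
by apply: funext => j; rewrite /wact /= /pcomp invMg !permM permKV mactM.
Qed.

Definition wreath_module : gmodule wreath_group :=
  @GModule wreath_group M wadd wzero wneg wact waddA waddC wadd0 waddN wact_add wact1 wactM.
End WreathGroup.

(* A functor F : G -> A[1] x| Gr[0] induces, coordinatewise, a functor from
   S_n wr wr G to A^n[1] x| (S_n x| Gr^n)[0]; the morphism component at
   coordinate j is read at the coordinate s^-1 j of the source. *)
Section WreathFunctor.
Variables (n : nat) (G : tg) (Gr : group) (A : gmodule Gr) (F : mfun G (elem A)).
Local Notation W := (wreath n G).
Local Notation EW := (elem (wreath_module n A)).

Definition wfob (X : wob n G) : gcar (wreath_group n Gr) := (X.1, fun i => fob F (X.2 i)).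

Definition wfhom (X Y : wob n G) (f : whom X Y) : @hom EW (wfob X) (wfob Y) :=
  (fun j => fval F (f.2 (X.1^-1%g j)),
   f_equal2 pair f.1 (funext (fun i => (fhom F (f.2 i)).2))).

Definition wfphi (X Y : wob n G) : @hom EW (gmul (wfob X) (wfob Y)) (wfob (wtens X Y)) :=
  (fun j => let i := (pcomp X.1 Y.1)^-1%g j in (fphi F (X.2 (Y.1 i)) (Y.2 i)).1,
   f_equal (pair (pcomp X.1 Y.1))
     (funext (fun i => (fphi F (X.2 (Y.1 i)) (Y.2 i)).2))).

Definition wfphi0 : @hom EW (gone (wreath_group n Gr)) (wfob (wunit n G)) :=
  (fun _ => (fphi0 F).1,
   f_equal (pair 1%g) (funext (fun _ => (fphi0 F).2))).

Definition wreath_fun : mfun W EW := @MFun W EW wfob wfhom wfphi wfphi0.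

Ltac wext := apply: (@elem_hom_eq _ (wreath_module n A)); apply: funext => j /=.

Lemma wreath_fun_mfun : is_mfun F -> is_mfun wreath_fun.
Proof.
move=> HF; split.
- by move=> X; wext; rewrite -/(fval F _) (fval_id HF).
- case=> s x [t y] [u z] [/= p f] [/= q g]; subst; wext.
  by rewrite /wadd (fval_comp HF).
- case=> s x [s' x'] [t y] [t' y'] [/= p f] [/= q g]; subst; wext.
  rewrite /wadd /wact /rhd /= (fval_tensm HF) (fval_comp HF) (fval_id HF) pcompVE permKV.
  by msimpl; abel.
- case=> s x [t y] [u z]; wext.
  rewrite /wadd /wact /wzero /rhd /= -/(fval F _) (fval_comp HF) !(fval_tensm HF) (fval_assoc HF).
  rewrite (fval_hom_of_eq HF) !(fval_id HF) !pcompVE !pcompE !permKV.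
  by msimpl; abel.
- case=> s x; wext.
  by rewrite /wadd /wact /wzero /rhd /= -/(fval F _) (fval_lunit HF); msimpl; abel.
- case=> s x; wext.
  rewrite /wadd /wact /wzero /rhd /= -/(fval F _) (fval_comp HF) (fval_tensm HF).
  rewrite (fval_runit HF) (fval_hom_of_eq HF) (fval_id HF) !pcompVE invg1 !perm1.
  by msimpl; abel.
Qed.

Lemma wreath_fun_surjective : ob_surjective F -> ob_surjective wreath_fun.
Proof.
move=> surj [s h]; exists (s, fun i => proj1_sig (cid (surj (h i)))).
congr (_, _); apply: funext => i.
exact: proj2_sig (cid (surj (h i))).
Qed.

Lemma wreath_fun_full : full F -> full wreath_fun.
Proof.
move=> fl [s x] [t y] /= e a.
have e1 : s = t := f_equal fst e.
have e2 i : fob F (x i) = fob F (y i) := f_equal (fun p => p.2 i) e.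
exists (e1, fun i => proj1_sig (cid (fl _ _ (e2 i) (a (s i))))).
apply: funext => j; rewrite /fval /= -/(fval F _).
by rewrite (proj2_sig (cid (fl _ _ (e2 _) (a (s _))))) permKV.
Qed.

Lemma wreath_fun_faithful : faithful F -> faithful wreath_fun.
Proof.
move=> fa [s x] [t y] [/= p f] [/= p' f'] /= h.
have -> : p' = p := eq_irrelevance _ _.
congr (_, _); apply: functional_extensionality_dep => i; apply: fa.
by have := f_equal (fun v => v (s i)) h; rewrite /fval /= permK.
Qed.

Lemma wreath_fun_weak_equivalence : weak_equivalence F -> weak_equivalence wreath_fun.
Proof.
case=> HF surj fl fa; split.
- exact: wreath_fun_mfun.
- exact: wreath_fun_surjective.
- exact: wreath_fun_full.
- exact: wreath_fun_faithful.
Qed.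
End WreathFunctor.

Lemma split_wreath_of_split (n : nat) (G : tg) :
  is_twogroup G -> split_2group G -> split_2group (wreath n G).
Proof.
move=> HG /(weak_of_split (twogroup_groupoid HG)) [Gr [A [F F_weq]]].
exact: split_of_weak (wreath_fun_weak_equivalence n F_weq).
Qed.

Section Transport.
Variables (G : tg) (HG : is_twogroup G).

Lemma hom_of_eq_refl (a : ob G) (p : a = a) : hom_of_eq p = idm a.
Proof. by rewrite (Prop_irrelevance p erefl). Qed.

Lemma hom_of_eq_irr (a b : ob G) (p q : a = b) : hom_of_eq p = hom_of_eq q.
Proof. by rewrite (Prop_irrelevance p q). Qed.

Lemma hom_of_eq_trans (a b c : ob G) (p : a = b) (q : b = c) :
  comp (hom_of_eq q) (hom_of_eq p) = hom_of_eq (etrans p q).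
Proof. by case: c / q; exact: (comp_idl HG). Qed.

Lemma hom_of_eq_tens (a a' b b' : ob G) (p : a = a') (q : b = b') :
  tensm (hom_of_eq p) (hom_of_eq q) = hom_of_eq (f_equal2 tens p q).
Proof. by case: a' / p; case: b' / q; rewrite !hom_of_eq_refl; exact: (tensm_id HG). Qed.

Lemma hom_of_eq_tensl (a b y : ob G) (p : a = b) :
  tensm (hom_of_eq p) (idm y) = hom_of_eq (f_equal (fun z => tens z y) p).
Proof. by case: b / p; exact: (tensm_id HG). Qed.

Lemma family_transport (I : Type) (X Y : I -> ob G) (f : forall i, hom (X i) (Y i))
  (i j : I) (e : i = j) :
  f i = comp (hom_of_eq (f_equal Y (esym e))) (comp (f j) (hom_of_eq (f_equal X e))).
Proof. by case: j / e; rewrite /= (comp_idl HG) (comp_idr HG). Qed.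

Lemma assoc_transport (a b c a' b' c' S : ob G) (q : S = tens (tens a b) c)
  (p' : tens a' (tens b' c') = tens a (tens b c)) (q' : S = tens (tens a' b') c') :
  a = a' -> b = b' -> c = c' ->
  comp (assoc a b c) (hom_of_eq q) = comp (hom_of_eq p') (comp (assoc a' b' c') (hom_of_eq q')).
Proof.
move=> ea eb ec; case: a' / ea p' q'; case: b' / eb; case: c' / ec => p' q'.
by rewrite (hom_of_eq_refl p') (comp_idl HG) (hom_of_eq_irr q q').
Qed.
End Transport.

Section WreathGroupoid.
Variables (n : nat) (G : tg).
Local Notation W := (wreath n G).

Lemma whom_eq (X Y : wob n G) (f g : whom X Y) : (forall i, f.2 i = g.2 i) -> f = g.
Proof.
case: f g => p f [q g] /= h; have -> : q = p := eq_irrelevance _ _.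
by congr (_, _); exact: functional_extensionality_dep.
Qed.

Lemma wreath_groupoid : is_twogroup G -> is_groupoid W.
Proof.
move=> HG; split.
- by move=> X Y Z T f g h; apply: whom_eq => i /=; exact: (comp_assoc HG).
- by move=> X Y f; apply: whom_eq => i /=; exact: (comp_idl HG).
- by move=> X Y f; apply: whom_eq => i /=; exact: (comp_idr HG).
- move=> X Y f; pose g i := proj1_sig (cid (groupoid HG (f.2 i))).
  exists (esym f.1, g); split; apply: whom_eq => i /=;
  by case: (proj2_sig (cid (groupoid HG (f.2 i)))).
Qed.

Lemma wcompE (X Y Z : wob n G) (f : whom X Y) (g : whom Y Z) i :
  (@comp W _ _ _ g f).2 i = comp (g.2 i) (f.2 i).
Proof. by []. Qed.

Lemma widmE (X : wob n G) i : (@idm W X).2 i = idm (X.2 i).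
Proof. by []. Qed.

Lemma wtensmE (X X' Y Y' : wob n G) (f : whom X X') (g : whom Y Y') i :
  (@tensm W _ _ _ _ f g).2 i =
  tensm (comp (hom_of_eq (f_equal (fun s : {perm 'I_n} => X'.2 (s i)) g.1)) (f.2 (Y.1 i)))
        (g.2 i).
Proof. by []. Qed.

Lemma wassocE (X Y Z : wob n G) i : (@assoc W X Y Z).2 i =
  comp (assoc (X.2 (pcomp Y.1 Z.1 i)) (Y.2 (Z.1 i)) (Z.2 i))
       (tensm (tensm (hom_of_eq (f_equal X.2 (esym (permM Z.1 Y.1 i))))
                     (idm (Y.2 (Z.1 i))))
              (idm (Z.2 i))).
Proof. by []. Qed.

Lemma whom_of_eqE (X Y : wob n G) (p : X = Y) i :
  (@hom_of_eq W X Y p).2 i = hom_of_eq (f_equal (fun Z : wob n G => Z.2 i) p).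
Proof. by case: Y / p. Qed.
End WreathGroupoid.

Section Inclusion.
Variables (m : nat) (G : tg) (HG : is_twogroup G).
Local Notation n := m.+1.
Local Notation W := (wreath n G).

Definition at0 (k : nat) (a b : ob G) : ob G := if k is 0 then a else b.

Definition iob (x : ob G) : wob n G := (1%g, fun i : 'I_n => at0 i x unit).

Definition ihom (x y : ob G) (f : hom x y) : whom (iob x) (iob y) :=
  (erefl, fun i : 'I_n =>
     match nat_of_ord i as k return hom (at0 k x unit) (at0 k y unit) with
     | 0 => f
     | _.+1 => idm unit
     end).

Lemma ihom0 (x y : ob G) (f : hom x y) : (ihom f).2 ord0 = f.
Proof. by []. Qed.

Lemma ihom_comp (x y z : ob G) (f : hom x y) (g : hom y z) :
  ihom (comp g f) = @comp W _ _ _ (ihom g) (ihom f).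
Proof. by apply: whom_eq => -[[|k] Hk] //=; rewrite (comp_idl HG). Qed.

Lemma ihom_id (x : ob G) : ihom (idm x) = @idm W (iob x).
Proof. by apply: whom_eq => -[[|k] Hk]. Qed.

Lemma wtens_diag (x y : 'I_n -> ob G) :
  wtens (1%g, x) (1%g, y) = (1%g, fun i => tens (x i) (y i)).
Proof.
rewrite /wtens /=; congr (_, _); first by rewrite /pcomp mulg1.
by apply: funext => i; rewrite /rhd perm1.
Qed.

Lemma wtensm_diag (x x' y y' : 'I_n -> ob G)
  (f : forall i, hom (x i) (x' i)) (g : forall i, hom (y i) (y' i)) :
  @comp W _ _ _ (@hom_of_eq W _ _ (wtens_diag x' y'))
    (@wtensm n G (1%g, x) (1%g, x') (1%g, y) (1%g, y') (erefl, f) (erefl, g))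
  = @comp W _ _ _
      ((erefl, fun i => tensm (f i) (g i))
        : whom (1%g, fun i => tens (x i) (y i)) (1%g, fun i => tens (x' i) (y' i)))
      (@hom_of_eq W _ _ (wtens_diag x y)).
Proof.
apply: whom_eq => i; rewrite !wcompE wtensmE !whom_of_eqE hom_of_eq_refl /= (comp_idl HG).
move: (f_equal _ (wtens_diag x' y')) (f_equal _ (wtens_diag x y)) => /= p1 p2.
rewrite /rhd in p1 p2 *; move: p1 p2 (perm1 i); move: ((1%g : {perm 'I_n}) i) => j p1 p2 ej.
by subst j; rewrite !hom_of_eq_refl (comp_idl HG) (comp_idr HG).
Qed.

Definition iclean (x y : ob G) :
  whom (1%g, fun i : 'I_n => tens (at0 i x unit) (at0 i y unit)) (iob (tens x y)) :=
  (erefl, fun i : 'I_n =>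
     match nat_of_ord i as k
       return hom (tens (at0 k x unit) (at0 k y unit)) (at0 k (tens x y) unit) with
     | 0 => idm (tens x y)
     | _.+1 => lunit unit
     end).

Lemma iclean0 (x y : ob G) : (iclean x y).2 ord0 = idm (tens x y).
Proof. by []. Qed.

Definition iphi (x y : ob G) : whom (wtens (iob x) (iob y)) (iob (tens x y)) :=
  @comp W _ _ _ (iclean x y) (@hom_of_eq W _ _ (wtens_diag (iob x).2 (iob y).2)).

Lemma iphi_nat (x x' y y' : ob G) (f : hom x x') (g : hom y y') :
  @comp W _ _ _ (iphi x' y') (wtensm (ihom f) (ihom g))
  = @comp W _ _ _ (ihom (tensm f g)) (iphi x y).
Proof.
have WG := wreath_groupoid n HG.
rewrite /iphi -(gd_assoc WG) wtensm_diag !(gd_assoc WG).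
congr (comp _ _); apply: whom_eq => -[[|k] Hk] /=.
- by rewrite (comp_idl HG) (comp_idr HG).
- by rewrite (tensm_id HG) (comp_idl HG) (comp_idr HG).
Qed.

Lemma iphi0 (x y : ob G) :
  (iphi x y).2 ord0 =
  hom_of_eq (f_equal (fun Z : wob n G => Z.2 ord0) (wtens_diag (iob x).2 (iob y).2)).
Proof. by rewrite /iphi wcompE whom_of_eqE /= (comp_idl HG). Qed.

Lemma wunit_iob : wunit n G = iob unit.
Proof. by congr (_, _); apply: funext => -[[|k] Hk]. Qed.

(* The two sides of the hexagon and unit axioms for the comparison iphi;
   they agree at coordinate 0, which is all that is needed below. *)
Definition ihex_l x y z : whom (wtens (wtens (iob x) (iob y)) (iob z)) (iob (tens x (tens y z))) :=
  @comp W _ _ _ (ihom (assoc x y z))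
    (@comp W _ _ _ (iphi (tens x y) z) (@tensm W _ _ _ _ (iphi x y) (@idm W (iob z)))).
Definition ihex_r x y z : whom (wtens (wtens (iob x) (iob y)) (iob z)) (iob (tens x (tens y z))) :=
  @comp W _ _ _ (iphi x (tens y z))
    (@comp W _ _ _ (@tensm W _ _ _ _ (@idm W (iob x)) (iphi y z)) (@assoc W (iob x) (iob y) (iob z))).
Definition iunit_l x : whom (wtens (wunit n G) (iob x)) (iob x) :=
  @comp W _ _ _ (ihom (lunit x))
    (@comp W _ _ _ (iphi unit x) (@tensm W _ _ _ _ (@hom_of_eq W _ _ wunit_iob) (@idm W (iob x)))).
Definition iunit_r x : whom (wtens (iob x) (wunit n G)) (iob x) :=
  @comp W _ _ _ (ihom (runit x))
    (@comp W _ _ _ (iphi x unit) (@tensm W _ _ _ _ (@idm W (iob x)) (@hom_of_eq W _ _ wunit_iob))).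

Lemma ihexagon0 x y z : (ihex_l x y z).2 ord0 = (ihex_r x y z).2 ord0.
Proof.
rewrite /ihex_l /ihex_r !wcompE !wtensmE wassocE ihom0 !iphi0.
rewrite (hom_of_eq_refl (f_equal _ (@idm W (iob z)).1)) (comp_idl HG).
rewrite !iclean0 !whom_of_eqE !(comp_idl HG) !widmE (comp_idr HG).
have e0 : (iob z).1 ord0 = ord0 by rewrite /= perm1.
rewrite (family_transport HG (iphi x y).2 e0) ?iphi0 ?iclean0 ?whom_of_eqE ?(comp_idl HG).
rewrite !(hom_of_eq_trans HG) !(hom_of_eq_tensl HG) !(hom_of_eq_tens HG) !(comp_assoc HG).
rewrite !(hom_of_eq_trans HG) -!(comp_assoc HG) (hom_of_eq_trans HG).
by apply: assoc_transport => //=; rewrite /rhd ?pcompE ?perm1.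
Qed.

Lemma iunit_l0 x : (iunit_l x).2 ord0 = (@lunit W (iob x)).2 ord0.
Proof.
rewrite /iunit_l !wcompE !wtensmE ihom0 ?iphi0.
rewrite (hom_of_eq_refl (f_equal _ (@idm W (iob x)).1)) (comp_idl HG).
rewrite ?iclean0 ?whom_of_eqE ?(comp_idl HG) ?widmE !(hom_of_eq_tensl HG) !(hom_of_eq_trans HG).
by rewrite hom_of_eq_refl (comp_idr HG).
Qed.

Lemma iunit_r0 x : (iunit_r x).2 ord0 = (@runit W (iob x)).2 ord0.
Proof.
rewrite /iunit_r !wcompE !wtensmE ihom0 ?iphi0.
rewrite ?iclean0 ?whom_of_eqE ?(comp_idl HG) ?widmE ?(comp_idr HG).
rewrite !(hom_of_eq_tens HG) !(hom_of_eq_trans HG) /= !(hom_of_eq_tensl HG).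
by congr (comp _ _); exact: hom_of_eq_irr.
Qed.
End Inclusion.

Lemma sig_eq (T : Type) (P : T -> Prop) (u v : {x | P x}) : sval u = sval v -> u = v.
Proof. by case: u v => a pa [b pb] /= e; subst b; rewrite (Prop_irrelevance pa pb). Qed.

(* Endomorphisms of the unit of the wreath product are tuples of
   endomorphisms of the unit of G; keeping only coordinate 0 and mapping back
   through F o iota gives an idempotent additive projection proj0 of B.  The
   objects F (iota x) form a subgroup of Gr, the image of proj0 is a module
   over it, and F o iota, corestricted to these, is a weak equivalence from G:
   its coherence axioms hold after projection, because the corresponding
   morphisms of the wreath product agree at coordinate 0. *)
Section SplitOfWreath.
Variables (m : nat) (G : tg) (HG : is_twogroup G) (Gr : group) (B : gmodule Gr).
Local Notation n := m.+1.
Local Notation W := (wreath n G).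
Variables (F : mfun W (elem B)).
Hypotheses (HF : is_mfun F) (F_full : full F) (F_faithful : faithful F).

Local Notation W_groupoid := (wreath_groupoid n HG).

Lemma fval_ihom_comp (x y z : ob G) (f : hom x y) (g : hom y z) :
  fval F (ihom m (comp g f)) = fval F (ihom m g) + fval F (ihom m f).
Proof. by rewrite (ihom_comp m HG) (fval_comp HF). Qed.

Lemma fval_ihom_id (x : ob G) : fval F (ihom m (idm x)) = 0.
Proof. by rewrite ihom_id (fval_id HF). Qed.

Lemma fval_ihom_tensm (x x' y y' : ob G) (f : hom x x') (g : hom y y') :
  fval F (ihom m (tensm f g)) =
  fval F (iphi m x' y') + fval F (@tensm W _ _ _ _ (ihom m f) (ihom m g)) - fval F (iphi m x y).
Proof. by have := f_equal (fval F) (iphi_nat m HG f g); rewrite !(fval_comp HF) => h; abel_using h. Qed.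

Lemma fval_ihom_tensl (a w : ob G) (u : hom a a) :
  fval F (ihom m (tensm u (idm w))) = fval F (ihom m u).
Proof. by rewrite fval_ihom_tensm (fval_tensm HF) ihom_id (fval_id HF); msimpl; abel. Qed.

Lemma fval_ihom_tensr (a w : ob G) (u : hom a a) :
  fval F (ihom m (tensm (idm w) u)) = mact (fob F (iob m w)) (fval F (ihom m u)).
Proof. by rewrite fval_ihom_tensm (fval_tensm HF) ihom_id (fval_id HF); msimpl; abel. Qed.

Definition unit_lift (b : mcar B) : whom (wunit n G) (wunit n G) :=
  proj1_sig (cid (F_full (erefl (fob F (wunit n G))) b)).
Lemma unit_liftE b : fval F (unit_lift b) = b.
Proof. exact: proj2_sig (cid (F_full (erefl (fob F (wunit n G))) b)). Qed.

Definition proj0 (b : mcar B) : mcar B := fval F (ihom m ((unit_lift b).2 ord0)).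

Definition winv_ob (x : ob G) : ob G := proj1_sig (cid (weak_inverse HG x)).
Definition winv_hom (x : ob G) : hom (tens x (winv_ob x)) unit :=
  let inh := proj1 (proj2_sig (cid (weak_inverse HG x))) in
  proj1_sig (cid (let: inhabits h := inh in ex_intro (fun _ => True) h I)).

(* Key property: for an endomorphism h of an object over the identity
   permutation, proj0 (F h) is the image of h at coordinate 0.  Indeed h is
   conjugate, through the tensor product with a coordinatewise weak inverse,
   to an endomorphism of the unit with the same image and the same
   coordinate 0 up to conjugation. *)
Lemma proj0_fval (X : wob n G) (hX : X.1 = 1%g) (h : whom X X) :
  proj0 (fval F h) = fval F (ihom m (h.2 ord0)).
Proof.
pose yv i := winv_ob (X.2 i); pose Z : wob n G := (1%g, yv).
have C1 : (wtens X Z).1 = (wunit n G).1 by rewrite /= /pcomp mul1g hX.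
pose C : whom (wtens X Z) (wunit n G) :=
  (C1, fun i => comp (winv_hom (X.2 i))
                     (hom_of_eq (f_equal (fun k => tens (X.2 k) (yv i)) (perm1 i)))).
case: (gd_inv W_groupoid C) => D [DC _].
pose h' := @comp W _ _ _ C (@comp W _ _ _ (@tensm W _ _ _ _ h (@idm W Z)) D).
have DC_val : fval F D + fval F C = 0 by rewrite -(fval_comp HF) DC (fval_id HF).
have h'_val : fval F h' = fval F h.
  rewrite /h' !(fval_comp HF) (fval_tensm HF) (fval_id HF); msimpl; abel_using DC_val.
have lift_h : unit_lift (fval F h) = h' by apply: F_faithful; rewrite unit_liftE h'_val.
have DC0 : fval F (ihom m (D.2 ord0)) + fval F (ihom m (C.2 ord0)) = 0.
  by rewrite -fval_ihom_comp -wcompE DC widmE fval_ihom_id.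
rewrite /proj0 lift_h /h' !wcompE !fval_ihom_comp wtensmE hom_of_eq_refl (comp_idl HG).
rewrite fval_ihom_tensl.
have -> : fval F (ihom m (h.2 ((1%g : {perm 'I_n}) ord0))) = fval F (ihom m (h.2 ord0)).
  by rewrite perm1.
by rewrite /= fval_ihom_comp in DC0; abel_using DC0.
Qed.

Lemma proj0D (a b : mcar B) : proj0 (a + b) = proj0 a + proj0 b.
Proof.
have lift_ab : unit_lift (a + b) = @comp W _ _ _ (unit_lift a) (unit_lift b).
  by apply: F_faithful; rewrite (fval_comp HF) !unit_liftE.
by rewrite /proj0 lift_ab wcompE fval_ihom_comp.
Qed.

Lemma proj00 : proj0 0 = 0.
Proof.
have double : proj0 0 = proj0 0 + proj0 0 by rewrite -proj0D addr0.
by apply: (addrI (proj0 0)); rewrite addr0 -double.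
Qed.

Lemma proj0N (a : mcar B) : proj0 (- a) = - proj0 a.
Proof. by apply/eqP; rewrite -addr_eq0 -proj0D addNr proj00. Qed.

Lemma proj0_ihom (x : ob G) (k : hom x x) : proj0 (fval F (ihom m k)) = fval F (ihom m k).
Proof. exact: (proj0_fval (X := iob m x) erefl (ihom m k)). Qed.

Lemma proj0_idem (b : mcar B) : proj0 (proj0 b) = proj0 b.
Proof. exact: proj0_ihom. Qed.

Lemma proj0_mact (x : ob G) (b : mcar B) :
  proj0 (mact (fob F (iob m x)) b) = mact (fob F (iob m x)) (proj0 b).
Proof.
pose h := @tensm W _ _ _ _ (@idm W (iob m x)) (unit_lift b).
have hX : (wtens (iob m x) (wunit n G)).1 = 1%g by rewrite /= /pcomp mulg1.
have <- : fval F h = mact (fob F (iob m x)) b.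
  by rewrite /h (fval_tensm HF) (fval_id HF) unit_liftE; msimpl; abel.
rewrite (proj0_fval hX h) /h wtensmE hom_of_eq_refl (comp_idl HG) fval_ihom_tensr.
by rewrite /rhd /= perm1.
Qed.

Lemma proj0_fixed_ihom (a : mcar B) (x : ob G) :
  proj0 a = a -> exists k : hom x x, fval F (ihom m k) = a.
Proof.
move=> fixed_a; case: (groupoid HG (lunit x)) => l' [l'l _].
exists (comp (lunit x) (comp (tensm ((unit_lift a).2 ord0) (idm x)) l')).
have l'l_val : fval F (ihom m l') + fval F (ihom m (lunit x)) = 0.
  by rewrite -fval_ihom_comp l'l fval_ihom_id.
rewrite !fval_ihom_comp fval_ihom_tensl -[RHS]fixed_a /proj0; abel_using l'l_val.
Qed.

Lemma proj0_coord0 (X Y : wob n G) (hX : X.1 = 1%g) (f g : whom X Y) :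
  f.2 ord0 = g.2 ord0 -> proj0 (fval F f) = proj0 (fval F g).
Proof.
move=> fg0; case: (gd_inv W_groupoid g) => g' [g'g _].
have g'g_val : proj0 (fval F g') + proj0 (fval F g) = 0.
  by rewrite -proj0D -(fval_comp HF) g'g (fval_id HF) proj00.
have : proj0 (fval F (@comp W _ _ _ g' f)) = 0.
  rewrite (proj0_fval hX) wcompE fg0 -wcompE g'g widmE fval_ihom_id //.
rewrite (fval_comp HF) proj0D => g'f_val; abel_using (etrans g'f_val (esym g'g_val)).
Qed.

Lemma fob_hom_eq (X Y : wob n G) (f : whom X Y) : fob F X = fob F Y.
Proof. exact: (fhom F f).2. Qed.

Lemma fob_iob_tens x y : gmul (fob F (iob m x)) (fob F (iob m y)) = fob F (iob m (tens x y)).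
Proof. exact: etrans (fphi F (iob m x) (iob m y)).2 (fob_hom_eq (iphi m x y)). Qed.

Lemma fob_iob_unit : gone Gr = fob F (iob m unit).
Proof. exact: etrans (fphi0 F).2 (f_equal (fob F) (wunit_iob m G)). Qed.

Lemma fob_iob_winv x : fob F (iob m (winv_ob x)) = ginv (fob F (iob m x)).
Proof.
have right_inv : gmul (fob F (iob m x)) (fob F (iob m (winv_ob x))) = gone Gr.
  by rewrite fob_iob_tens (fob_hom_eq (ihom m (winv_hom x))) fob_iob_unit.
by rewrite -[LHS]gmul1l -(gmulVl (fob F (iob m x))) -gmulA right_inv gmul1r.
Qed.

Definition img_car := {g : gcar Gr | exists x, fob F (iob m x) = g}.

Lemma img_mul_closed a b :
  (exists x, fob F (iob m x) = a) -> (exists y, fob F (iob m y) = b) ->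
  exists z, fob F (iob m z) = gmul a b.
Proof. by case=> x <- [y <-]; exists (tens x y); rewrite fob_iob_tens. Qed.

Lemma img_inv_closed a : (exists x, fob F (iob m x) = a) -> exists z, fob F (iob m z) = ginv a.
Proof. by case=> x <-; exists (winv_ob x); exact: fob_iob_winv. Qed.

Definition img_mul (u v : img_car) : img_car :=
  exist _ (gmul (sval u) (sval v)) (img_mul_closed (svalP u) (svalP v)).
Definition img_one : img_car := exist _ (gone Gr) (ex_intro _ unit (esym fob_iob_unit)).
Definition img_inv (u : img_car) : img_car := exist _ (ginv (sval u)) (img_inv_closed (svalP u)).

Lemma img_mulA a b c : img_mul a (img_mul b c) = img_mul (img_mul a b) c.
Proof. by apply: sig_eq; exact: gmulA. Qed.
Lemma img_mul1l a : img_mul img_one a = a.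
Proof. by apply: sig_eq; exact: gmul1l. Qed.
Lemma img_mul1r a : img_mul a img_one = a.
Proof. by apply: sig_eq; exact: gmul1r. Qed.
Lemma img_mulVl a : img_mul (img_inv a) a = img_one.
Proof. by apply: sig_eq; exact: gmulVl. Qed.
Lemma img_mulVr a : img_mul a (img_inv a) = img_one.
Proof. by apply: sig_eq; exact: gmulVr. Qed.

Definition img_group : group := Group img_mulA img_mul1l img_mul1r img_mulVl img_mulVr.

Definition fix_car := {b : mcar B | proj0 b = b}.

Lemma fix_add_closed (a b : mcar B) : proj0 a = a -> proj0 b = b -> proj0 (a + b) = a + b.
Proof. by move=> fa fb; rewrite proj0D fa fb. Qed.
Lemma fix_opp_closed (a : mcar B) : proj0 a = a -> proj0 (- a) = - a.
Proof. by move=> fa; rewrite proj0N fa. Qed.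
Lemma fix_act_closed (g : gcar Gr) (a : mcar B) :
  (exists x, fob F (iob m x) = g) -> proj0 a = a -> proj0 (mact g a) = mact g a.
Proof. by case=> x <- fa; rewrite proj0_mact fa. Qed.

Definition fix_add (a b : fix_car) : fix_car := exist _ _ (fix_add_closed (svalP a) (svalP b)).
Definition fix_zero : fix_car := exist _ 0 proj00.
Definition fix_opp (a : fix_car) : fix_car := exist _ _ (fix_opp_closed (svalP a)).
Definition fix_act (g : img_car) (a : fix_car) : fix_car :=
  exist _ _ (fix_act_closed (svalP g) (svalP a)).

Lemma fix_addA a b c : fix_add a (fix_add b c) = fix_add (fix_add a b) c.
Proof. by apply: sig_eq; exact: addrA. Qed.
Lemma fix_addC a b : fix_add a b = fix_add b a.
Proof. by apply: sig_eq; exact: addrC. Qed.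
Lemma fix_add0 a : fix_add fix_zero a = a.
Proof. by apply: sig_eq; exact: add0r. Qed.
Lemma fix_addN a : fix_add (fix_opp a) a = fix_zero.
Proof. by apply: sig_eq; exact: addNr. Qed.
Lemma fix_act_add g a b : fix_act g (fix_add a b) = fix_add (fix_act g a) (fix_act g b).
Proof. by apply: sig_eq; exact: mact_add. Qed.
Lemma fix_act1 a : fix_act (gone img_group) a = a.
Proof. by apply: sig_eq; exact: mact1. Qed.
Lemma fix_actM g h a : fix_act (gmul (g:=img_group) g h) a = fix_act g (fix_act h a).
Proof. by apply: sig_eq; exact: mactM. Qed.

Definition fix_module : gmodule img_group :=
  @GModule img_group fix_car fix_add fix_zero fix_opp fix_act
    fix_addA fix_addC fix_add0 fix_addN fix_act_add fix_act1 fix_actM.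

Definition pob (x : ob G) : gcar img_group := exist _ (fob F (iob m x)) (ex_intro _ x erefl).
Definition pval (b : mcar B) : mcar fix_module := exist _ (proj0 b) (proj0_idem b).
Definition phom (x y : ob G) (f : hom x y) : @hom (elem fix_module) (pob x) (pob y) :=
  (pval (fval F (ihom m f)), sig_eq (u := pob x) (v := pob y) (fob_hom_eq (ihom m f))).
Definition pphi (x y : ob G) : @hom (elem fix_module) (gmul (pob x) (pob y)) (pob (tens x y)) :=
  (pval (fval F (iphi m x y) + (fphi F (iob m x) (iob m y)).1),
   sig_eq (u := gmul (pob x) (pob y)) (v := pob (tens x y)) (fob_iob_tens x y)).
Definition pphi0 : @hom (elem fix_module) (gone img_group) (pob unit) :=
  (pval (fphi0 F).1, sig_eq (u := gone img_group) (v := pob unit) fob_iob_unit).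

Definition restr : mfun G (elem fix_module) := @MFun G (elem fix_module) pob phom pphi pphi0.

Lemma proj0_ihexagon x y z : proj0 (fval F (ihex_l m x y z)) = proj0 (fval F (ihex_r m x y z)).
Proof. by apply: proj0_coord0; [rewrite /= /pcomp !mulg1 | exact: ihexagon0]. Qed.

Lemma proj0_iunit_l x : proj0 (fval F (iunit_l m x)) = proj0 (fval F (@lunit W (iob m x))).
Proof. by apply: proj0_coord0; [rewrite /= /pcomp !mulg1 | exact: iunit_l0]. Qed.

Lemma proj0_iunit_r x : proj0 (fval F (iunit_r m x)) = proj0 (fval F (@runit W (iob m x))).
Proof. by apply: proj0_coord0; [rewrite /= /pcomp !mulg1 | exact: iunit_r0]. Qed.

Ltac val_simpl :=
  rewrite ?(fval_comp HF) ?(fval_hom_of_eq HF); msimpl;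
  rewrite ?(proj0D, proj0N, proj0_mact, proj00); msimpl.
Ltac restr_ext := apply: (@elem_hom_eq _ fix_module); apply: sig_eq => /=.

Lemma restr_mfun : is_mfun restr.
Proof.
split.
- by move=> x; restr_ext; rewrite fval_ihom_id proj00.
- by move=> x y z f g; restr_ext; rewrite fval_ihom_comp proj0D.
- move=> x x' y y' f g; restr_ext.
  by rewrite fval_ihom_tensm (fval_tensm HF); val_simpl; abel.
- move=> x y z; restr_ext; have := proj0_ihexagon x y z.
  rewrite /ihex_l /ihex_r !(fval_comp HF) !(fval_tensm HF) (fval_assoc HF) !(fval_id HF).
  by val_simpl => h; val_simpl; abel_using h.
- move=> x; restr_ext; have := proj0_iunit_l x.
  rewrite /iunit_l !(fval_comp HF) !(fval_tensm HF) (fval_lunit HF) (fval_id HF).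
  by val_simpl => h; val_simpl; abel_using h.
- move=> x; restr_ext; have := proj0_iunit_r x.
  rewrite /iunit_r !(fval_comp HF) !(fval_tensm HF) (fval_runit HF) (fval_id HF).
  by val_simpl => h; val_simpl; abel_using h.
Qed.

Lemma restr_surjective : ob_surjective restr.
Proof. by case=> g [x gx]; exists x; exact: sig_eq. Qed.

(* A morphism with prescribed projected component: correct an arbitrary
   morphism f0 : x -> y by an endomorphism of x carrying the difference. *)
Lemma restr_full : full restr.
Proof.
move=> x y exy [a fixed_a].
have [h _] := F_full (f_equal sval exy) 0.
pose f0 : hom x y := h.2 ord0.
have fixed_diff : proj0 (a - proj0 (fval F (ihom m f0))) = a - proj0 (fval F (ihom m f0)).
  by rewrite proj0D proj0N proj0_idem fixed_a.
have [k val_k] := proj0_fixed_ihom x fixed_diff.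
exists (comp f0 k); apply: sig_eq => /=.
by rewrite fval_ihom_comp proj0D proj0_ihom val_k; abel.
Qed.

(* If f and f' have the same projected image, then comp g' f has the image of
   the identity, g' being an inverse of f'; hence f = f' by faithfulness. *)
Lemma restr_faithful : faithful restr.
Proof.
move=> x y f f' /(f_equal sval) /= eq_val.
case: (groupoid HG f') => g' [g'f' f'g'].
have g'f'_val : proj0 (fval F (ihom m g')) + proj0 (fval F (ihom m f')) = 0.
  by rewrite -proj0D -fval_ihom_comp g'f' fval_ihom_id proj00.
have g'f_id : comp g' f = idm x.
  have eq_F : fval F (ihom m (comp g' f)) = fval F (ihom m (idm x)).
    rewrite -proj0_ihom fval_ihom_comp proj0D fval_ihom_id eq_val; abel_using g'f'_val.
  by move: eq_F => /F_faithful /(f_equal (fun h => h.2 ord0)).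
by rewrite -(comp_idr HG f') -g'f_id (comp_assoc HG) f'g' (comp_idl HG).
Qed.

Lemma restr_weak_equivalence : weak_equivalence restr.
Proof.
split.
- exact: restr_mfun.
- exact: restr_surjective.
- exact: restr_full.
- exact: restr_faithful.
Qed.
End SplitOfWreath.

Lemma split_of_split_wreath (m : nat) (G : tg) :
  is_twogroup G -> split_2group (wreath m.+1 G) -> split_2group G.
Proof.
move=> HG /(weak_of_split (wreath_groupoid m.+1 HG)) [Gr [B [F [HF _ F_full F_faithful]]]].
exact: split_of_weak (restr_weak_equivalence HG HF F_full F_faithful).
Qed.

Theorem proposition3p17 (G : tg) (n : nat) :
  is_twogroup G -> (1 <= n)%N -> (split_2group (wreath n G) <-> split_2group G).
Proof.
move=> HG; case: n => [//|m] _; split.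
- exact: split_of_split_wreath.
- exact: split_wreath_of_split.
Qed.
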